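(* In the conditional setting described in the context, fix $\mathbf x\in\mathcal X$ and assume A1$''$, A2 and A3. If there exists $k^\star\in\{1,\dots,K\}$ with $\inf_{\mathbf w\in\mathcal W^*}w_{k^\star}>\frac12$, then $\liminf_{n\to\infty}\Pr\big(Y_{\mathbf x}\in\mathcal C_{\mathrm{comb}}(\mathbf x;\mathcal D_n)\big)\ge1-\alpha$.
   Context: Conditional setting: fix $K\ge2$ and $\alpha\in(0,1)$. For each $n$, on a common probability space there is a random data set $\mathcal D_n$. For each $k\in\{1,\dots,K\}$ and each $\mathbf x\in\mathcal X\subseteq\mathbb R^p$, $\mathcal C_k(\mathbf x;\mathcal D_n)\subseteq\mathbb R$ is a prediction set determined by $\mathcal D_n$ and $\mathbf x$. For a fixed test covariate value $\mathbf x$, $Y_{\mathbf x}$ denotes a real random variable distributed as the conditional law of the response given covariate $\mathbf x$, independent of $\mathcal D_n$; conditioning on $\{\mathbf X=\mathbf x\}$ means evaluating at $\mathbf x$ with response $Y_{\mathbf x}$. The events $\{Y_{\mathbf x}\in\mathcal C_k(\mathbf x;\mathcal D_n)\}$ are assumed measurable. Let $\Delta^{K-1}=\{\mathbf w\in[0,1]^K:w_k\ge0,\sum_k w_k=1\}$, let $\widehat{\mathbf w}_n=(\widehat w_{n,1},\dots,\widehat w_{n,K})$ be a $\sigma(\mathcal D_n)$-measurable random vector in $\Delta^{K-1}$, and let $\mathcal W^*\subseteq\Delta^{K-1}$ be a nonempty closed convex set; $\|\cdot\|$ is the Euclidean norm. A1$''$: $\sup_{k\in\{1,\dots,K\}}\big|\Pr(Y_{\mathbf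 x}\notin\mathcal C_k(\mathbf x;\mathcal D_n)\mid\mathcal D_n)-\alpha\big|\to0$ in probability as $n\to\infty$. A2: $\inf_{\mathbf w\in\mathcal W^*}\|\widehat{\mathbf w}_n-\mathbf w\|\to0$ in probability as $n\to\infty$. A3: $\mathcal C_{\mathrm{comb}}(\mathbf x;\mathcal D_n):=\{y\in\mathbb R:\sum_{k=1}^K\widehat w_{n,k}\mathbf 1\{y\in\mathcal C_k(\mathbf x;\mathcal D_n)\}>1/2\}$. *)

From HB Require Import structures.
From mathcomp Require Import all_boot all_order all_algebra.
From mathcomp Require Import all_classical all_reals all_analysis.
Set Implicit Arguments. Unset Strict Implicit. Unset Printing Implicit Defensive.
Import Order.TTheory GRing.Theory Num.Theory.
Import numFieldNormedType.Exports.
Local Open Scope classical_set_scope.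
Local Open Scope ring_scope.

(* Weight vectors in R^K are row vectors 'rV[R]_K; coordinate k is w 0 k. *)

Definition simplex (R : realType) (K : nat) : set 'rV[R]_K :=
  [set w | (forall k, 0 <= w ord0 k) /\ \sum_(k < K) w ord0 k = 1].

Definition enorm (R : realType) (K : nat) (v : 'rV[R]_K) : R :=
  Num.sqrt (\sum_(k < K) v ord0 k ^+ 2).

Definition convex_wset (R : realType) (K : nat) (W : set 'rV[R]_K) : Prop :=
  forall w1 w2 (t : R), W w1 -> W w2 -> 0 <= t -> t <= 1 ->
    W (t *: w1 + (1 - t) *: w2).

Definition dist_to (R : realType) (K : nat) (W : set 'rV[R]_K) (v : 'rV[R]_K) : R :=
  inf [set enorm (v - w) | w in W].

Definition cvg_in_prob (d : measure_display) (Omega : measurableType d)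
  (R : realType) (P : probability Omega R) (X : nat -> Omega -> R) (c : R) : Prop :=
  forall eps : R, 0 < eps ->
    (fun n => P [set om | eps <= `|X n om - c|]) @ \oo --> 0%E.

(* the combined (majority-vote) set of A3, on the data value t *)
Definition C_comb (R : realType) (K : nat) (Td : Type)
  (w : Td -> 'rV[R]_K) (C : 'I_K -> Td -> set R) (t : Td) : set R :=
  [set y | 2^-1 < \sum_(k < K) w t ord0 k * (y \in C k t)%:R].

From HB Require Import structures.
From mathcomp Require Import all_boot all_order all_algebra.
From mathcomp Require Import all_classical all_reals all_analysis.
From mathcomp Require Import ring lra.
Set Implicit Arguments. Unset Strict Implicit. Unset Printing Implicit Defensive.
Import Order.TTheory GRing.Theory Num.Theory.
Import numFieldNormedType.Exports measurable_realfun.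
Local Open Scope classical_set_scope.
Local Open Scope ring_scope.

(* On the event where w_{n,k*} > 1/2 and every C_k misses Y_x with conditional
   probability within e of alpha, the majority-vote set contains C_{k*}, so its
   conditional coverage is at least 1 - alpha - e; integrating over the data gives
   P(Y_x in C_comb) >= (1 - alpha - e) P(event). Since every w in W* has
   w_{k*} >= m > 1/2, the event can only fail if the distance from w_n to W* is at
   least m - 1/2 or the deviation in A1'' is at least e, so by A2 and A1'' its
   probability is at least 1 - 2e for large n. Letting e -> 0 gives the bound. *)

Section EuclideanNorm.
Variables (R : realType) (K : nat).
Implicit Types (a b : 'I_K -> R) (u v : 'rV[R]_K).

Lemma lagrange_identity a b :
  \sum_i \sum_j (a i * b j - a j * b i) ^+ 2 =
  2%:R * ((\sum_i a i ^+ 2) * (\sum_j b j ^+ 2) - (\sum_i a i * b i) ^+ 2).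
Proof.
have sqr_sums : (\sum_i a i ^+ 2) * (\sum_j b j ^+ 2) = \sum_i \sum_j (a i * b j) ^+ 2.
  rewrite mulr_suml; apply: eq_bigr => i _; rewrite mulr_sumr.
  by apply: eq_bigr => j _; rewrite exprMn.
have sqr_dot : (\sum_i a i * b i) ^+ 2 = \sum_i \sum_j (a i * b i) * (a j * b j).
  by rewrite expr2 mulr_suml; apply: eq_bigr => i _; rewrite mulr_sumr.
have sym_sqr : \sum_i \sum_j (a j * b i) ^+ 2 = \sum_i \sum_j (a i * b j) ^+ 2.
  by rewrite exchange_big.
have cross : \sum_i \sum_j (2%:R * ((a i * b i) * (a j * b j))) =
    2%:R * \sum_i \sum_j (a i * b i) * (a j * b j).
  by rewrite mulr_sumr; apply: eq_bigr => i _; rewrite mulr_sumr.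
rewrite sqr_sums sqr_dot.
transitivity (\sum_i \sum_j ((a i * b j) ^+ 2 + (a j * b i) ^+ 2
    - 2%:R * ((a i * b i) * (a j * b j)))).
  by apply: eq_bigr => i _; apply: eq_bigr => j _; ring.
under eq_bigr do rewrite sumrB big_split.
by rewrite sumrB big_split /= sym_sqr cross; ring.
Qed.

Lemma cauchy_schwarz_sum a b :
  (\sum_i a i * b i) ^+ 2 <= (\sum_i a i ^+ 2) * (\sum_j b j ^+ 2).
Proof.
rewrite -subr_ge0 -(@pmulr_rge0 _ 2%:R) // -lagrange_identity.
by apply: sumr_ge0 => i _; apply: sumr_ge0 => j _; exact: sqr_ge0.
Qed.

Lemma enorm_ge0 v : 0 <= enorm v.
Proof. exact: sqrtr_ge0. Qed.

Lemma enorm_sqr v : enorm v ^+ 2 = \sum_k v ord0 k ^+ 2.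
Proof. by rewrite /enorm sqr_sqrtr // sumr_ge0 // => k _; exact: sqr_ge0. Qed.

Lemma enormD u v : enorm (u + v) <= enorm u + enorm v.
Proof.
rewrite -(ler_pXn2r (n:=2)) ?nnegrE ?addr_ge0 ?enorm_ge0 //.
have dot_le : \sum_k u ord0 k * v ord0 k <= enorm u * enorm v.
  rewrite -[X in _ <= X]ger0_norm ?mulr_ge0 ?enorm_ge0 //.
  rewrite -[X in _ <= X]sqrtr_sqr exprMn !enorm_sqr.
  apply: le_trans (ler_norm _) _; rewrite -sqrtr_sqr.
  exact/ler_wsqrtr/cauchy_schwarz_sum.
have -> : enorm (u + v) ^+ 2 =
    enorm u ^+ 2 + enorm v ^+ 2 + 2%:R * \sum_k u ord0 k * v ord0 k.
  rewrite !enorm_sqr mulr_sumr -!big_split /=.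
  by apply: eq_bigr => k _; rewrite mxE; ring.
rewrite sqrrD; nra.
Qed.

Lemma enormN v : enorm (- v) = enorm v.
Proof. by congr Num.sqrt; apply: eq_bigr => k _; rewrite mxE sqrrN. Qed.

Lemma enormB u v : enorm (u - v) = enorm (v - u).
Proof. by rewrite -enormN opprB. Qed.

Lemma ler_coord_enorm v k : `|v ord0 k| <= enorm v.
Proof.
rewrite -sqrtr_sqr /enorm; apply: ler_wsqrtr.
by rewrite (bigD1 k) //= lerDl; apply: sumr_ge0 => j _; exact: sqr_ge0.
Qed.

Lemma enorm_le_coord_bound v e : (forall k, `|v ord0 k| <= e) ->
  enorm v <= Num.sqrt (K%:R * e ^+ 2).
Proof.
move=> ve; apply: ler_wsqrtr.
rewrite mulr_natl -[K in _ *+ K]card_ord -sumr_const; apply: ler_sum => k _.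
by rewrite -real_normK ?num_real // lerXn2r ?nnegrE // (le_trans _ (ve k)).
Qed.

Lemma enorm_rat_approx v e : 0 < e ->
  exists q : 'rV[rat]_K, enorm (v - map_mx ratr q) < e.
Proof.
move=> e0; have [e' [e'0 ->]] : exists e', 0 < e' /\ e = e' * K.+1%:R.
  by exists (e / K.+1%:R); rewrite divr_gt0 // divfK // pnatr_eq0.
have /fin_all_exists [f fv] : forall k, exists r : rat, `|v ord0 k - ratr r| <= e'.
  move=> k.
  have [r] : exists r : rat, ratr r \in `]v ord0 k, v ord0 k + e'[.
    by apply: rat_in_itvoo; rewrite ltrDl.
  rewrite in_itv /= => /andP[r1 r2]; exists r.
  rewrite ler_norml; apply/andP; split; lra.
exists (\row_k f k); apply: le_lt_trans (enorm_le_coord_bound (e := e') _) _.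
  by move=> k; rewrite !mxE; exact: fv.
have e_gt0 : 0 < e' * K.+1%:R by rewrite mulr_gt0.
rewrite -[X in _ < X]gtr0_norm // -sqrtr_sqr ltr_sqrt ?exprn_gt0 //.
rewrite -natr1 exprMn; have : 0 <= K%:R :> R by rewrite ler0n.
have : 0 < e' ^+ 2 by rewrite exprn_gt0.
nra.
Qed.

End EuclideanNorm.

Section DistTo.
Variables (R : realType) (K : nat) (W : set 'rV[R]_K).
Hypothesis W_neq0 : W !=set0.
Implicit Types u v : 'rV[R]_K.

Let dist_has_lbound v : has_lbound [set enorm (v - w) | w in W].
Proof. by exists 0 => _ [w _ <-]; exact: enorm_ge0. Qed.

Lemma dist_to_le v w : W w -> dist_to W v <= enorm (v - w).
Proof. by move=> Ww; apply: (ge_inf (dist_has_lbound v)); exists w. Qed.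

Lemma dist_to_ge v x : (forall w, W w -> x <= enorm (v - w)) -> x <= dist_to W v.
Proof.
move=> xle; apply: lb_le_inf; first by case: W_neq0 => w Ww; exists (enorm (v - w)), w.
by move=> _ [w Ww <-]; exact: xle.
Qed.

Lemma dist_to_ge0 v : 0 <= dist_to W v.
Proof. by apply: dist_to_ge => w _; exact: enorm_ge0. Qed.

Lemma dist_to_lipschitz u v : dist_to W v <= dist_to W u + enorm (v - u).
Proof.
rewrite -lerBlDr; apply: dist_to_ge => w Ww; rewrite lerBlDr.
apply: le_trans (dist_to_le v Ww) _.
have -> : v - w = (u - w) + (v - u) by rewrite [RHS]addrC addrA subrK.
exact: enormD.
Qed.

Lemma dist_to_ge_coord_gap v k : has_lbound [set w ord0 k | w in W] ->
  inf [set w ord0 k | w in W] - v ord0 k <= dist_to W v.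
Proof.
move=> lbk; apply: dist_to_ge => w Ww.
have inf_le : inf [set w ord0 k | w in W] <= w ord0 k by apply: (ge_inf lbk); exists w.
apply: le_trans (ler_coord_enorm _ k); rewrite !mxE -normrN opprB.
by apply: le_trans (ler_norm _); lra.
Qed.

End DistTo.

Section Measurability.
Variables (d : measure_display) (T : measurableType d) (R : realType).
Implicit Types f g : T -> R.

Lemma measurable_ltr f g : measurable_fun setT f -> measurable_fun setT g ->
  measurable [set x | f x < g x].
Proof.
move=> mf mg; rewrite -[X in measurable X]setTI.
have -> : [set x | f x < g x] = (fun x => f x < g x) @^-1` [set true].
  by apply/seteqP; split => x /=.
exact: measurable_fun_ltr.
Qed.

Lemma measurable_ler f g : measurable_fun setT f -> measurable_fun setT g ->
  measurable [set x | f x <= g x].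
Proof.
move=> mf mg; rewrite -[X in measurable X]setTI.
have -> : [set x | f x <= g x] = (fun x => f x <= g x) @^-1` [set true].
  by apply/seteqP; split => x /=.
exact: measurable_fun_ler.
Qed.

Lemma measurable_bigmaxr (I : Type) (s : seq I) (F : I -> T -> R) :
  (forall i, measurable_fun setT (F i)) ->
  measurable_fun setT (fun x => \big[Num.max/0]_(i <- s) F i x).
Proof.
move=> mF; elim: s => [|i s IH].
  by under eq_fun do rewrite big_nil; exact: measurable_cst.
under eq_fun do rewrite big_cons.
exact: measurable_maxr.
Qed.

Variables (K : nat) (V : T -> 'rV[R]_K).
Hypothesis mV : forall k, measurable_fun setT (fun x => V x ord0 k).

Lemma measurable_enormB (c : 'rV[R]_K) :
  measurable_fun setT (fun x => enorm (V x - c)).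
Proof.
apply: measurableT_comp
  (continuous_measurable_fun (@sqrt_continuous R)) _.
under eq_fun do under eq_bigr do rewrite !mxE.
apply: measurable_sum => k; apply: measurable_funX.
exact: measurable_funB (mV k) (measurable_cst _).
Qed.

Variables (W : set 'rV[R]_K).
Hypothesis W_neq0 : W !=set0.

(* [dist_to W] is 1-Lipschitz, so a point is at distance < e from W iff some rational
   point q satisfies |V x - q| + dist_to W q < e: a countable union of measurable sets. *)
Lemma measurable_dist_to_lt e : measurable [set x | dist_to W (V x) < e].
Proof.
have -> : [set x | dist_to W (V x) < e] = \bigcup_(q : 'rV[rat]_K)
    [set x | enorm (V x - map_mx ratr q) + dist_to W (map_mx ratr q) < e].
  apply/seteqP; split => x /=.
  - move=> dist_lt; have gap0 : 0 < (e - dist_to W (V x)) / 2%:R.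
      by rewrite divr_gt0 // subr_gt0.
    have [q q_near] := enorm_rat_approx (V x) gap0.
    exists q => //=; have := dist_to_lipschitz W_neq0 (V x) (map_mx ratr q).
    rewrite enormB; lra.
  - case=> q _ /=; have := dist_to_lipschitz W_neq0 (map_mx ratr q) (V x); lra.
apply: countable_bigcupT_measurable => [|q]; first exact: countableP.
apply: measurable_ltr (measurable_cst _).
exact: measurable_funD (measurable_enormB _) (measurable_cst _).
Qed.

End Measurability.

Section ExtendedRealSequences.
Variable R : realType.
Local Open Scope ereal_scope.
Implicit Types u : nat -> \bar R.

Lemma cvg0_near_le u (e : R) : u @ \oo --> 0 -> (0 < e)%R ->
  \forall n \near \oo, u n <= e%:E.
Proof.
move=> /fine_cvgP[u_fin u_cvg] e0; near=> n.
have /fineK <- : u n \is a fin_num by near: n.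
have : (`|0 - (fine \o u) n| < e)%R by near: n; exact: cvgr_dist_lt.
by rewrite sub0r normrN lee_fin => /ltW; apply: le_trans (ler_norm _).
Unshelve. all: by end_near.
Qed.

Lemma limn_einf_ge u (b : R) :
  (forall e, (0 < e)%R -> \forall n \near \oo, (b - e)%:E <= u n) ->
  b%:E <= limn_einf u.
Proof.
move=> ub; apply/lee_addgt0Pr => e e0; rewrite -leeBlDr // -EFinB.
have [N _ uN] := ub e e0.
rewrite limn_einf_lim (cvg_lim _ (@cvg_einfs_sup _ u)) //.
apply: le_trans (ereal_sup_ubound _) => /=; last by exists N.
by apply/ereal_infP => _ [n nN <-]; exact: uN.
Qed.

End ExtendedRealSequences.

Section ProbabilityBounds.
Context d (T : measurableType d) (R : realType).
Variable P : probability T R.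
Local Open Scope ereal_scope.

Lemma cvg_in_prob_near_le (X : nat -> T -> R) c (eps e : R) :
  cvg_in_prob P X c -> (0 < eps)%R -> (0 < e)%R ->
  \forall n \near \oo, P [set x | (eps <= `|X n x - c|)%R] <= e%:E.
Proof. by move=> Xc eps0; apply: cvg0_near_le; exact: Xc. Qed.

Lemma probability_ge_of_setC_le (A : set T) (b : R) : measurable A ->
  P (~` A) <= b%:E -> (1 - b)%:E <= P A.
Proof.
move=> mA; rewrite probability_setC //.
have /fineK <- := fin_num_measure P _ mA.
by rewrite -EFinB !lee_fin lerBlDr addrC -lerBlDr.
Qed.

Lemma probability_ge_of_setC_subU (A B1 B2 : set T) (e1 e2 : R) :
  measurable A -> measurable B1 -> measurable B2 -> ~` A `<=` B1 `|` B2 ->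
  P B1 <= e1%:E -> P B2 <= e2%:E -> (1 - (e1 + e2))%:E <= P A.
Proof.
move=> mA mB1 mB2 AB PB1 PB2; apply: probability_ge_of_setC_le => //.
apply: le_trans (le_measure _ _ _ AB) _; rewrite ?inE //; first exact: measurableC.
  exact: measurableU.
by apply: le_trans (measureU2 _ mB1 mB2) _; rewrite EFinD leeD.
Qed.

End ProbabilityBounds.

Lemma product_measure1_ge d1 d2 (T1 : measurableType d1) (T2 : measurableType d2)
    (R : realType) (m1 : {measure set T1 -> \bar R})
    (m2 : {sigma_finite_measure set T2 -> \bar R})
    (S : set (T1 * T2)) (A : set T1) (c : R) :
  measurable S -> measurable A -> (0 <= c)%R ->
  (forall x, A x -> c%:E <= m2 (xsection S x))%E ->
  (c%:E * m1 A <= (m1 \x m2) S)%E.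
Proof.
move=> mS mA c0 Sc; rewrite -integral_cst //.
have mSx := measurable_fun_xsection m2 mS.
apply: (@le_trans _ _ (\int[m1]_(x in A) (m2 \o xsection S) x)%E).
  by apply: ge0_le_integral => //; exact: measurable_funS mSx.
by apply: ge0_subset_integral => //= x _; exact: measure_ge0.
Qed.

Lemma C_sub_C_comb (R : realType) (K : nat) (Td : Type) (w : Td -> 'rV[R]_K)
    (C : 'I_K -> Td -> set R) t k : (forall j, 0 <= w t ord0 j) -> 2^-1 < w t ord0 k ->
  C k t `<=` C_comb w C t.
Proof.
move=> w_ge0 wk y Cy; rewrite /C_comb /= (bigD1 k) //= mem_set // mulr1.
apply: lt_le_trans wk _; rewrite lerDl; apply: sumr_ge0 => j _.
by rewrite mulr_ge0 ?ler0n.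
Qed.

Section MeasurableMajorityVote.
Variables (d : measure_display) (T : measurableType d) (R : realType) (K : nat).
Variables (w : T -> 'rV[R]_K) (C : 'I_K -> T -> set R).
Hypothesis mw : forall k, measurable_fun setT (fun t => w t ord0 k).
Hypothesis mC : forall k, measurable [set p : T * R | C k p.1 p.2].

Lemma measurable_C_comb : measurable [set p : T * R | C_comb w C p.1 p.2].
Proof.
apply: measurable_ltr (measurable_cst _) _.
apply: measurable_sum => k; apply: measurable_funM.
  exact: measurableT_comp (mw k) measurable_fst.
have -> : (fun p : T * R => ((p.2 \in C k p.1)%:R : R)) =
    \1_[set p : T * R | C k p.1 p.2].
  by apply/funext => p; rewrite indicE; congr (_%:R); apply/idP/idP; rewrite !in_setE.
exact: measurable_indic.
Qed.

End MeasurableMajorityVote.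

Lemma measurable_preimage_map_fst d1 d2 d3 (T1 : measurableType d1)
    (T2 : measurableType d2) (T3 : measurableType d3) (f : T1 -> T2)
    (S : set (T2 * T3)) :
  measurable_fun setT f -> measurable S -> measurable [set p | S (f p.1, p.2)].
Proof.
move=> mf mS; rewrite -[X in measurable X]setTI.
apply: (measurable_fun_pair (measurableT_comp mf measurable_fst) measurable_snd) => //.
Qed.

Section MajorityVoteCoverage.
Context d (Omega : measurableType d) (R : realType) (P : probability Omega R).
Context (mu : probability R R) dD (Td : measurableType dD).
Variables (D : nat -> Omega -> Td) (K : nat) (alpha : R).
Variables (C : nat -> 'I_K -> Td -> set R) (w : nat -> Td -> 'rV[R]_K).
Hypothesis mD : forall n, measurable_fun setT (D n).
Hypothesis mC : forall n k, measurable [set p : Td * R | C n k p.1 p.2].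
Hypothesis w_simplex : forall n t, simplex (w n t).
Hypothesis mw : forall n k, measurable_fun setT (fun t => w n t ord0 k).

Let coverage n := (P \x mu)%E [set p : Omega * R | C_comb (w n) (C n) (D n p.1) p.2].
Let dev n om := \big[Num.max/0]_(k < K) `|fine (mu (~` C n k (D n om))) - alpha|.

Let measurable_dev n : measurable_fun setT (dev n).
Proof.
apply: measurable_bigmaxr => k.
have mCc : measurable_fun setT (fun om => mu (~` C n k (D n om))).
  have -> : (fun om => mu (~` C n k (D n om))) =
      (mu \o xsection (~` [set p | C n k p.1 p.2])) \o D n.
    by apply/funext => om /=; congr (mu _); apply/seteqP; split => y;
      rewrite /xsection /= in_setE.
  exact: measurableT_comp (measurable_fun_xsection mu (measurableC (mC n k))) (mD n).
exact (measurableT_comp (@normr_measurable R setT)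
  (measurable_funB (measurableT_comp (@fine_measurable R setT measurableT) mCc)
     (measurable_cst _))).
Qed.

Variable kstar : 'I_K.

Let good_event n (e : R) := [set om | 2^-1 < w n (D n om) ord0 kstar /\ dev n om < e].

Let measurable_good_event n (e : R) : measurable (good_event n e).
Proof.
apply: measurableI; last exact: measurable_ltr (measurable_dev n) (measurable_cst _).
exact: measurable_ltr (measurable_cst _) (measurableT_comp (mw n kstar) (mD n)).
Qed.

Lemma coverage_ge_on_good_event n (e : R) : 0 <= 1 - alpha - e ->
  ((1 - alpha - e)%:E * P (good_event n e) <= coverage n)%E.
Proof.
have mS := measurable_preimage_map_fst (mD n) (measurable_C_comb (mw n) (mC n)).
move=> ae; apply: (product_measure1_ge P mS (measurable_good_event n e) ae).
move=> om [w_gt dev_lt].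
have mCk : measurable (C n kstar (D n om)).
  rewrite (_ : C n kstar _ = xsection [set p | C n kstar p.1 p.2] (D n om)).
    exact: measurable_xsection.
  by apply/seteqP; split => y; rewrite /xsection /= in_setE.
apply: (@le_trans _ _ (mu (C n kstar (D n om)))).
  rewrite -addrA -opprD; apply: probability_ge_of_setC_le => //.
  have /fineK <- := fin_num_measure mu _ (measurableC mCk).
  rewrite lee_fin -lerBlDl; apply: le_trans (ler_norm _) _.
  by apply: ltW; apply: (le_lt_trans _ dev_lt); exact: le_bigmax.
apply: le_measure; rewrite ?inE //; first exact: measurable_xsection mS.
have [w_ge0 _] := w_simplex n (D n om).
by move=> y /(C_sub_C_comb w_ge0 w_gt) Sy; rewrite /xsection /= in_setE.
Qed.

Variable W : set 'rV[R]_K.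
Hypothesis W_neq0 : W !=set0.
Hypothesis W_simplex : W `<=` simplex (R:=R) (K:=K).
Hypothesis dev_cvg : cvg_in_prob P dev 0.
Hypothesis dist_cvg : cvg_in_prob P (fun n om => dist_to W (w n (D n om))) 0.
Hypothesis kstar_gt : 2^-1 < inf [set v ord0 kstar | v in W].

Lemma good_event_near_ge (e : R) : 0 < e ->
  \forall n \near \oo, ((1 - (e + e))%:E <= P (good_event n e))%E.
Proof.
move=> e0; have := kstar_gt; set m := inf [set v ord0 kstar | v in W] => m_gt.
have lb_kstar : has_lbound [set v ord0 kstar | v in W].
  by exists 0 => _ [v Wv <-]; have [v_ge0 _] := W_simplex Wv.
have gap0 : 0 < m - 2^-1 by rewrite subr_gt0.
near=> n.
pose far := [set om | m - 2^-1 <= `|dist_to W (w n (D n om)) - 0|].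
pose deviant := [set om | e <= `|dev n om - 0|].
apply: (@probability_ge_of_setC_subU _ _ _ _ _ far deviant).
- exact: measurable_good_event.
- have -> : far = ~` [set om | dist_to W (w n (D n om)) < m - 2^-1].
    apply/seteqP; split => om; rewrite /far /= subr0 ger0_norm ?dist_to_ge0 //;
      by rewrite leNgt => /negP.
  apply/measurableC/measurable_dist_to_lt => // k.
  exact: measurableT_comp (mw n k) (mD n).
- apply: measurable_ler (measurable_cst _) _.
  exact (measurableT_comp (@normr_measurable R setT)
    (measurable_funB (measurable_dev n) (measurable_cst _))).
- move=> om /not_andP[/negP|/negP]; rewrite -leNgt => le_bound;
    [left | right]; rewrite /far /deviant /=.
    apply: le_trans (ler_norm _); rewrite subr0.
    by apply: le_trans (dist_to_ge_coord_gap W_neq0 _ lb_kstar); rewrite /m; lra.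
  by apply: le_trans (ler_norm _); rewrite subr0.
- by rewrite /far; near: n; exact: cvg_in_prob_near_le dist_cvg gap0 e0.
- by rewrite /deviant; near: n; exact: (cvg_in_prob_near_le dev_cvg e0 e0).
Unshelve. all: by end_near.
Qed.

Hypothesis alpha_ge0 : 0 <= alpha.

Lemma coverage_near_ge (e : R) : 0 < e ->
  \forall n \near \oo, ((1 - alpha - 3%:R * e)%:E <= coverage n)%E.
Proof.
move=> e0; have [ae|ea] := leP e (1 - alpha); last first.
  apply: nearW => n; apply: le_trans (measure_ge0 _ _).
  by rewrite lee_fin; move: e0 ea; lra.
have ae' : 0 <= 1 - alpha - e by move: ae; lra.
apply: filterS (good_event_near_ge e0) => n good_ge.
apply: le_trans (coverage_ge_on_good_event n ae').
apply: (@le_trans _ _ ((1 - alpha - e)%:E * (1 - (e + e))%:E)%E).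
  have : 0 <= e * (alpha + e) by apply: mulr_ge0; move: e0 alpha_ge0; lra.
  by rewrite -EFinM lee_fin; nra.
by apply: lee_wpmul2l; first by rewrite lee_fin.
Qed.

End MajorityVoteCoverage.

Theorem theorem4
  (R : realType)
  (d : measure_display) (Omega : measurableType d) (P : probability Omega R)
  (mu : probability R R)
  (dD : measure_display) (Td : measurableType dD)
  (D : nat -> Omega -> Td) (hD : forall n, measurable_fun setT (D n))
  (K : nat) (hK : (2 <= K)%N) (alpha : R) (halpha : 0 < alpha < 1)
  (C : nat -> 'I_K -> Td -> set R)
  (hC : forall n k, measurable [set p : Td * R | C n k p.1 p.2])
  (w : nat -> Td -> 'rV[R]_K)
  (hw_simplex : forall n t, simplex (w n t))
  (hw_meas : forall n k, measurable_fun setT (fun t => w n t ord0 k))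
  (W : set 'rV[R]_K)
  (hW0 : W !=set0) (hWsub : W `<=` simplex (R:=R) (K:=K))
  (hWclosed : closed W) (hWconvex : convex_wset W)
  (A1 : cvg_in_prob P
          (fun n om => \big[Num.max/0]_(k < K)
                         `|fine (mu (~` C n k (D n om))) - alpha|) 0)
  (A2 : cvg_in_prob P (fun n om => dist_to W (w n (D n om))) 0)
  (kstar : 'I_K) (hkstar : 2^-1 < inf [set v ord0 kstar | v in W]) :
  ((1 - alpha)%:E <=
     limn_einf (fun n => (P \x mu)
        [set p : Omega * R | C_comb (w n) (C n) (D n p.1) p.2]))%E.
Proof.
have alpha_ge0 : 0 <= alpha by case/andP: halpha => /ltW.
apply: limn_einf_ge => e e0.
have e3_gt0 : 0 < e / 3%:R by rewrite divr_gt0.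
have := coverage_near_ge hD hC hw_simplex hw_meas hW0 hWsub A1 A2 hkstar alpha_ge0 e3_gt0.
by apply: filterS => n; rewrite mulrC divfK ?pnatr_eq0 // opprD addrA.
Qed.
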